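(* Let $\mathcal{A}=\mathcal{A}_1\cup\mathcal{A}_2$ be an arrangement of lines in $\mathbb{P}^3$, with $\mathcal{A}_1,\mathcal{A}_2$ disjoint, $|\mathcal{A}_1|=a$, $|\mathcal{A}_2|=b$, such that every line of $\mathcal{A}_1$ meets every line of $\mathcal{A}_2$ and any two distinct lines in the same $\mathcal{A}_i$ are disjoint (so $\Gamma(\mathcal{A})\cong K_{a,b}$), where $a,b$ are positive integers with $3\le a\le b$ or $a\le b\le 3$. Then there is a smooth quadric surface $Q\subset\mathbb{P}^3$ containing all lines of $\mathcal{A}$; specifically, for each $i=1,2$, the lines of $\mathcal{A}_i$ all lie in one of the two rulings of $Q$.
   Context: A line arrangement is a finite collection of distinct lines in $\mathbb{P}^3$, each defined over the (arbitrary) ground field. A smooth quadric surface $Q\cong\mathbb{P}^1\times\mathbb{P}^1$ has two rulings, i.e. two families of lines on it. *)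

From HB Require Import structures.
From mathcomp Require Import all_boot all_order all_algebra.
Set Implicit Arguments. Unset Strict Implicit. Unset Printing Implicit Defensive.
Import GRing.Theory.
Local Open Scope ring_scope.

(* Projective 3-space P^3 over a field F: points are nonzero row vectors of
   F^4 up to scaling; a line is a 2-dimensional subspace of F^4. *)

Section P3.
Variable F : fieldType.

Definition vec4 (x0 x1 x2 x3 : F) : 'rV[F]_4 :=
  \row_(j < 4) nth 0 [:: x0; x1; x2; x3] j.

Definition coord4 (x : 'rV[F]_4) (i : nat) : F := x ord0 (inord i).

Definition is_line (L : {vspace 'rV[F]_4}) : bool := \dim L == 2.

Definition lines_meet (L M : {vspace 'rV[F]_4}) : bool := (L :&: M)%VS != 0%VS.
Definition lines_disjoint (L M : {vspace 'rV[F]_4}) : bool := (L :&: M)%VS == 0%VS.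

(* Standard split smooth quadric Q0 = V(x0 x3 - x1 x2) = Segre image of P^1 x P^1,
   [s:t],[u:v] |-> [su : sv : tu : tv]. *)
Definition qform0 (x : 'rV[F]_4) : F :=
  coord4 x 0 * coord4 x 3 - coord4 x 1 * coord4 x 2.

(* A smooth quadric Q ~= P^1 x P^1 is given by a projective coordinate change
   g (invertible 4x4 matrix): Q_g = { [x] | qform0 (x *m g) = 0 }. *)
Definition on_quadric (g : 'M[F]_4) (x : 'rV[F]_4) : Prop := qform0 (x *m g) = 0.

(* First ruling of Q_g: the lines {[s:t]} x P^1, i.e. spanned in the
   standard coordinates by (s,0,t,0),(0,s,0,t). *)
Definition ruling1 (g : 'M[F]_4) (L : {vspace 'rV[F]_4}) : Prop :=
  exists s t : F, (s, t) != (0, 0) /\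
    L = <<[:: vec4 s 0 t 0 *m invmx g; vec4 0 s 0 t *m invmx g]>>%VS.

(* Second ruling of Q_g: the lines P^1 x {[u:v]}, spanned in the
   standard coordinates by (u,v,0,0),(0,0,u,v). *)
Definition ruling2 (g : 'M[F]_4) (L : {vspace 'rV[F]_4}) : Prop :=
  exists u v : F, (u, v) != (0, 0) /\
    L = <<[:: vec4 u v 0 0 *m invmx g; vec4 0 0 u v *m invmx g]>>%VS.

End P3.

From HB Require Import structures.
From mathcomp Require Import all_boot all_order all_algebra ring.
Import GRing.Theory.
Local Open Scope ring_scope.

Set Implicit Arguments.
Unset Strict Implicit.
Unset Printing Implicit Defensive.

(* Three pairwise skew lines L1, L2, L3 determine a basis of F^4 in whose
   coordinates they are the lines {[1:0]}, {[0:1]}, {[1:1]} x P^1 of the Segre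
   quadric x0 x3 = x1 x2: take bases (p0, p1) of L1 and (q0, q1) of L2 such that
   L3 = <p0 + q0, p1 + q1>.  A line M meeting all three meets them in points of
   the quadric; writing the third point as a combination of the other two, the
   vanishing of its 2x2 coordinate determinant forces M to be a line
   P^1 x {[u:v]} of the other ruling.  With at least three lines on each side
   this puts A2, and then A1, on the two rulings of one quadric; when A2 has
   exactly three lines one step suffices; with at most two lines on each side a
   suitable basis is read off the intersection points directly. *)

Section Lines.
Variable F : fieldType.
Implicit Types (p q z : 'rV[F]_4) (L M U V : {vspace 'rV[F]_4}).

Definition indep2 p q := forall x y : F, x *: p + y *: q = 0 -> x = 0 /\ y = 0.

Lemma indep2_free p q : indep2 p q <-> free [:: p; q].
Proof.
split=> [pq_indep | /freeP pq_free x y pq0].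
  apply/freeP => k; rewrite !big_ord_recl big_ord0 addr0 => /pq_indep [k0 k1].
  by case=> -[|[|//]] i_lt2; [rewrite -k0 | rewrite -k1]; congr k; apply: val_inj.
have := pq_free (fun i : 'I_2 => nth 0 [:: x; y] i).
by rewrite !big_ord_recl big_ord0 addr0 => /(_ pq0) k0; split; [apply: (k0 0) | apply: (k0 1)].
Qed.

Lemma mem_span2 p q z : z \in <<[:: p; q]>>%VS <-> exists x y, z = x *: p + y *: q.
Proof.
rewrite span_cons span_seq1; split.
- by move/memv_addP => [u /vlineP [x ->] [w /vlineP [y ->] ->]]; exists x, y.
- by move=> [x [y ->]]; apply: memv_add; apply/vlineP; [exists x | exists y].
Qed.

Lemma subv_span2 p q L : p \in L -> q \in L -> (<<[:: p; q]>> <= L)%VS.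
Proof. by move=> pL qL; apply/span_subvP => z; rewrite !inE => /orP [] /eqP ->. Qed.

Lemma dim_span2 p q : indep2 p q -> \dim <<[:: p; q]>> = 2%N.
Proof. by move/indep2_free/eqP. Qed.

Lemma line_span2 L p q :
  is_line L -> p \in L -> q \in L -> indep2 p q -> L = <<[:: p; q]>>%VS.
Proof.
move=> /eqP dimL pL qL pq_indep; apply/eqP; rewrite eq_sym eqEdim subv_span2 //.
by rewrite dimL dim_span2.
Qed.

Lemma line_sub_span2 L p q :
  is_line L -> (L <= <<[:: p; q]>>)%VS -> indep2 p q -> L = <<[:: p; q]>>%VS.
Proof. by move=> /eqP dimL Lpq pq_indep; apply/eqP; rewrite eqEdim Lpq dimL dim_span2. Qed.

Lemma line_basis L : is_line L -> exists p q, indep2 p q /\ L = <<[:: p; q]>>%VS.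
Proof.
move=> /eqP dimL; have /andP [/eqP span_basis basis_free] := vbasisP L.
have : size (vbasis L) = 2%N by rewrite size_tuple dimL.
move: span_basis basis_free; case: (tval (vbasis L)) => [|p [|q [|]]] //= Lpq pq_free _.
by exists p, q; split; [apply/indep2_free | rewrite Lpq].
Qed.

Lemma meet_point L M : lines_meet L M -> exists z, [/\ z != 0, z \in L & z \in M].
Proof.
move=> LM; exists (vpick (L :&: M)); rewrite vpick0.
by have := memv_pick (L :&: M); rewrite memv_cap => /andP [].
Qed.

Lemma lines_meetC L M : lines_meet L M = lines_meet M L.
Proof. by rewrite /lines_meet capvC. Qed.

Lemma disjoint_mem0 U V z : lines_disjoint U V -> z \in U -> z \in V -> z = 0.
Proof. by move=> /eqP UV zU zV; apply/eqP; rewrite -memv0 -UV memv_cap zU zV. Qed.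

Lemma indep2_disjoint U V p q :
  lines_disjoint U V -> p \in U -> q \in V -> p != 0 -> q != 0 -> indep2 p q.
Proof.
move=> UV pU qV p_neq0 q_neq0 x y pq0.
have xp0 : x *: p = 0.
  apply: (disjoint_mem0 UV); first by rewrite memvZ.
  by rewrite -[x *: p]opprK (addr0_eq pq0) memvN memvZ.
move: pq0; rewrite xp0 add0r => /eqP; rewrite scaler_eq0 (negbTE q_neq0) orbF => /eqP ->.
by move/eqP: xp0; rewrite scaler_eq0 (negbTE p_neq0) orbF => /eqP ->.
Qed.

Lemma extend_line_basis L p :
  is_line L -> p \in L -> p != 0 -> exists q, q \in L /\ indep2 p q.
Proof.
move=> Lline pL p_neq0; have [w0 [w1 [w_indep defL]]] := line_basis Lline.
have outside_line z : z \notin <[p]>%VS -> indep2 p z.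
  move=> zp x y pz0; have [y0 | y_neq0] := eqVneq y 0.
    by move: pz0; rewrite y0 scale0r addr0 => /eqP; rewrite scaler_eq0 (negbTE p_neq0) orbF => /eqP.
  case/negP: zp; apply/vlineP; exists (- (x / y)).
  apply: (scalerI y_neq0); rewrite scalerA mulrN mulrC divfK // scaleNr.
  by apply/eqP; rewrite -subr_eq0 opprK addrC pz0.
have [w0p | w0p] := boolP (w0 \in <[p]>%VS); last first.
  by exists w0; split; [rewrite defL memv_span ?inE ?eqxx | exact: outside_line].
have [w1p | w1p] := boolP (w1 \in <[p]>%VS); last first.
  by exists w1; split; [rewrite defL memv_span // !inE eqxx orbT | exact: outside_line].
have /dimvS : (L <= <[p]>)%VS by rewrite defL subv_span2.
by rewrite (eqP Lline) dim_vline p_neq0.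
Qed.

Lemma exists_notin U : (\dim U < 4)%N -> exists z, z \notin U.
Proof.
move=> dimU; exists (vpick U^C); apply/negP => pickU.
have : vpick U^C == 0 by rewrite -memv0 -(capv_compl U) memv_cap pickU memv_pick.
by rewrite vpick0 -dimv_eq0 dimv_compl dimvf /= subn_eq0 leqNgt dimU.
Qed.

Lemma det2_eq0_proportional (a b c d : F) :
  (a, b) != (0, 0) -> a * d - c * b = 0 -> exists k, c = k * a /\ d = k * b.
Proof.
rewrite xpair_eqE negb_and => ab0 det0.
have [a0 | a_neq0] := eqVneq a 0.
- rewrite a0 eqxx /= in ab0; exists (d / b); split; last by rewrite divfK.
  move: det0; rewrite a0 mul0r sub0r => /eqP; rewrite oppr_eq0 mulf_eq0 (negbTE ab0) orbF.
  by move=> /eqP ->; rewrite mulr0.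
- exists (c / a); split; first by rewrite divfK.
  have ad : a * d = c * b by apply/eqP; rewrite -subr_eq0 det0.
  by rewrite -[d](mulKf a_neq0) ad; ring.
Qed.

End Lines.

Section Frames.
Variable F : fieldType.

Record frame := Frame { fr0 : 'rV[F]_4; fr1 : 'rV[F]_4; fr2 : 'rV[F]_4; fr3 : 'rV[F]_4 }.

Implicit Types (B : frame) (z : 'rV[F]_4) (L M U V : {vspace 'rV[F]_4}).

(* In these
   coordinates the quadric Q_g of g := invmx (frame_mx B) is x0 x3 = x1 x2, and
   frame_ruling1 B, frame_ruling2 B below are its two rulings. *)
Definition frame_mx B : 'M[F]_4 :=
  \matrix_(i < 4) nth 0 [:: fr0 B; fr1 B; fr2 B; fr3 B] i.

Definition frame_pt B (x0 x1 x2 x3 : F) := vec4 x0 x1 x2 x3 *m frame_mx B.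

Definition frame_swap B := Frame (fr0 B) (fr2 B) (fr1 B) (fr3 B).

Definition is_frame B := forall x0 x1 x2 x3, frame_pt B x0 x1 x2 x3 = 0 ->
  [/\ x0 = 0, x1 = 0, x2 = 0 & x3 = 0].

Lemma vec4_eta (x : 'rV[F]_4) : x = vec4 (x 0 0) (x 0 1) (x 0 2) (x 0 3).
Proof.
apply/rowP => j; rewrite !mxE.
by case: j => [[|[|[|[|j]]]] j_lt4] //=; congr (x _ _); apply: val_inj.
Qed.

Lemma vec4_lincomb (x y a0 a1 a2 a3 c0 c1 c2 c3 : F) :
  x *: vec4 a0 a1 a2 a3 + y *: vec4 c0 c1 c2 c3 =
  vec4 (x * a0 + y * c0) (x * a1 + y * c1) (x * a2 + y * c2) (x * a3 + y * c3).
Proof. by apply/rowP => -[[|[|[|[|j]]]] j_lt4]; rewrite !mxE. Qed.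

Lemma frame_ptE B x0 x1 x2 x3 :
  frame_pt B x0 x1 x2 x3 = x0 *: fr0 B + x1 *: fr1 B + x2 *: fr2 B + x3 *: fr3 B.
Proof.
by rewrite /frame_pt mulmx_sum_row !big_ord_recl big_ord0 !rowK !mxE /= addr0 !addrA.
Qed.

Lemma frame_pt_lincomb B (x y a0 a1 a2 a3 c0 c1 c2 c3 : F) :
  x *: frame_pt B a0 a1 a2 a3 + y *: frame_pt B c0 c1 c2 c3 =
  frame_pt B (x * a0 + y * c0) (x * a1 + y * c1) (x * a2 + y * c2) (x * a3 + y * c3).
Proof. by rewrite /frame_pt !scalemxAl -mulmxDl vec4_lincomb. Qed.

Lemma frame_pt0 B : frame_pt B 0 0 0 0 = 0.
Proof. by rewrite frame_ptE !scale0r !addr0. Qed.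

Lemma frame_pt_unit B :
  [/\ frame_pt B 1 0 0 0 = fr0 B, frame_pt B 0 1 0 0 = fr1 B,
      frame_pt B 0 0 1 0 = fr2 B & frame_pt B 0 0 0 1 = fr3 B].
Proof. by split; rewrite frame_ptE !scale0r !scale1r ?addr0 ?add0r. Qed.

Lemma frame_pt_swap B x0 x1 x2 x3 :
  frame_pt (frame_swap B) x0 x1 x2 x3 = frame_pt B x0 x2 x1 x3.
Proof. by rewrite !frame_ptE /=; congr (_ + _); apply: addrAC. Qed.

Lemma frame_swapK : involutive frame_swap.
Proof. by case. Qed.

Lemma is_frame_swap B : is_frame B -> is_frame (frame_swap B).
Proof. by move=> B_frame x0 x1 x2 x3; rewrite frame_pt_swap => /B_frame []. Qed.

Lemma frame_pt_inj B x0 x1 x2 x3 y0 y1 y2 y3 : is_frame B ->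
  frame_pt B x0 x1 x2 x3 = frame_pt B y0 y1 y2 y3 ->
  [/\ x0 = y0, x1 = y1, x2 = y2 & x3 = y3].
Proof.
move=> B_frame xy; have := B_frame (x0 - y0) (x1 - y1) (x2 - y2) (x3 - y3).
have -> : frame_pt B (x0 - y0) (x1 - y1) (x2 - y2) (x3 - y3) =
          1 *: frame_pt B x0 x1 x2 x3 + (-1) *: frame_pt B y0 y1 y2 y3.
  by rewrite frame_pt_lincomb; congr frame_pt; ring.
rewrite xy scale1r scaleN1r subrr => /(_ erefl) [] /eqP e0 /eqP e1 /eqP e2 /eqP e3.
by split; apply/eqP; rewrite -subr_eq0.
Qed.

Lemma is_frame_unit B : is_frame B -> frame_mx B \in unitmx.
Proof.
move=> B_frame; rewrite -row_free_unit -kermx_eq0; apply/eqP/row_matrixP => i.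
rewrite row0; set x := row i _.
have : x *m frame_mx B = 0 by rewrite /x -row_mul mulmx_ker row0.
rewrite [x]vec4_eta => /B_frame [-> -> -> ->].
by apply/rowP => -[[|[|[|[|j]]]] j_lt4]; rewrite !mxE.
Qed.

Lemma is_frame_of_disjoint U V p0 p1 q0 q1 :
  lines_disjoint U V -> p0 \in U -> p1 \in U -> q0 \in V -> q1 \in V ->
  indep2 p0 p1 -> indep2 q0 q1 -> is_frame (Frame p0 p1 q0 q1).
Proof.
move=> UV p0U p1U q0V q1V p_indep q_indep x0 x1 x2 x3; rewrite frame_ptE /= -addrA => pq0.
have p_part0 : x0 *: p0 + x1 *: p1 = 0.
  apply: (disjoint_mem0 UV); first by rewrite memvD ?memvZ.
  by rewrite -[_ + _]opprK (addr0_eq pq0) memvN memvD ?memvZ.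
have q_part0 : x2 *: q0 + x3 *: q1 = 0 by move: pq0; rewrite p_part0 add0r.
by have [-> ->] := p_indep _ _ p_part0; have [-> ->] := q_indep _ _ q_part0.
Qed.

Definition frame_ruling1 B L := exists s t : F, (s, t) != (0, 0) /\
  L = <<[:: frame_pt B s 0 t 0; frame_pt B 0 s 0 t]>>%VS.

Definition frame_ruling2 B L := frame_ruling1 (frame_swap B) L.

Lemma frame_ruling2E B L : frame_ruling2 B L <-> exists u v : F, (u, v) != (0, 0) /\
  L = <<[:: frame_pt B u v 0 0; frame_pt B 0 0 u v]>>%VS.
Proof. by split=> -[u [v [uv0 ->]]]; exists u, v; rewrite ?frame_pt_swap. Qed.

Lemma frame_ruling1_fr01 B L : L = <<[:: fr0 B; fr1 B]>>%VS -> frame_ruling1 B L.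
Proof.
exists 1, 0; split; first by rewrite xpair_eqE oner_eq0.
by have [-> -> _ _] := frame_pt_unit B.
Qed.

Lemma frame_ruling1_fr23 B L : L = <<[:: fr2 B; fr3 B]>>%VS -> frame_ruling1 B L.
Proof.
exists 0, 1; split; first by rewrite xpair_eqE oner_eq0 andbF.
by have [_ _ -> ->] := frame_pt_unit B.
Qed.

Lemma mem_frame_ruling1 B s t L z :
  L = <<[:: frame_pt B s 0 t 0; frame_pt B 0 s 0 t]>>%VS -> z \in L ->
  exists a c, z = frame_pt B (a * s) (c * s) (a * t) (c * t).
Proof.
move=> ->; move/mem_span2 => [a [c ->]]; exists a, c.
by rewrite frame_pt_lincomb; congr frame_pt; ring.
Qed.

Lemma indep2_frame_ruling2 B u v : is_frame B -> (u, v) != (0, 0) ->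
  indep2 (frame_pt B u v 0 0) (frame_pt B 0 0 u v).
Proof.
move=> B_frame uv0 x y; rewrite frame_pt_lincomb -(frame_pt0 B).
move=> /(frame_pt_inj B_frame); rewrite !mulr0 !addr0 !add0r => -[xu0 xv0 yu0 yv0].
have cancel_uv w : w * u = 0 -> w * v = 0 -> w = 0.
  move=> wu0 wv0; move: uv0; rewrite xpair_eqE negb_and => /orP [] nz; apply/eqP.
  - by move/eqP: wu0; rewrite mulf_eq0 (negbTE nz) orbF.
  - by move/eqP: wv0; rewrite mulf_eq0 (negbTE nz) orbF.
by split; apply: cancel_uv.
Qed.

Lemma frame_ruling1_det_neq0 B s1 t1 s2 t2 :
  is_frame B -> (s1, t1) != (0, 0) -> (s2, t2) != (0, 0) ->
  lines_disjoint <<[:: frame_pt B s1 0 t1 0; frame_pt B 0 s1 0 t1]>>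
                 <<[:: frame_pt B s2 0 t2 0; frame_pt B 0 s2 0 t2]>> ->
  s1 * t2 - s2 * t1 != 0.
Proof.
move=> B_frame st1 st2 L12; apply/eqP => /(det2_eq0_proportional st1) [k [ks1 kt1]].
suff : frame_pt B s2 0 t2 0 = frame_pt B 0 0 0 0.
  by move=> /(frame_pt_inj B_frame) [s2_0 _ t2_0 _]; move: st2; rewrite s2_0 t2_0 eqxx.
rewrite frame_pt0; apply: (disjoint_mem0 L12); last by rewrite memv_span ?inE ?eqxx.
by apply/mem_span2; exists k, 0; rewrite frame_pt_lincomb ks1 kt1; congr frame_pt; ring.
Qed.

Definition skew_triple L1 L2 L3 :=
  [/\ lines_disjoint L1 L2, lines_disjoint L1 L3 & lines_disjoint L2 L3].

Lemma segre_det_lincomb (l m s1 t1 a1 c1 s2 t2 a2 c2 : F) :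
  (l * (a1 * s1) + m * (a2 * s2)) * (l * (c1 * t1) + m * (c2 * t2))
  - (l * (c1 * s1) + m * (c2 * s2)) * (l * (a1 * t1) + m * (a2 * t2))
  = l * m * ((s1 * t2 - s2 * t1) * (a1 * c2 - a2 * c1)).
Proof. ring. Qed.

(* The point z_i of M on L_i has coordinates (a_i s_i, c_i s_i, a_i t_i, c_i t_i);
   as z3 = l z1 + m z2 with l, m != 0, segre_det_lincomb and the skewness of L1, L2
   force [a1:c1] = [a2:c2], so M is the line P^1 x {[a1:c1]}. *)
Lemma frame_ruling2_of_transversal B L1 L2 L3 M :
  is_frame B -> frame_ruling1 B L1 -> frame_ruling1 B L2 -> frame_ruling1 B L3 ->
  skew_triple L1 L2 L3 -> is_line M ->
  lines_meet M L1 -> lines_meet M L2 -> lines_meet M L3 -> frame_ruling2 B M.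
Proof.
move=> B_frame [s1 [t1 [st1 defL1]]] [s2 [t2 [st2 defL2]]] [s3 [t3 [_ defL3]]].
move=> [L12 L13 L23] Mline M1 M2 M3.
have [z1 [z1_neq0 z1M z1L]] := meet_point M1.
have [z2 [z2_neq0 z2M z2L]] := meet_point M2.
have [z3 [z3_neq0 z3M z3L]] := meet_point M3.
have [a1 [c1 def_z1]] := mem_frame_ruling1 defL1 z1L.
have [a2 [c2 def_z2]] := mem_frame_ruling1 defL2 z2L.
have [a3 [c3 def_z3]] := mem_frame_ruling1 defL3 z3L.
have defM := line_span2 Mline z1M z2M (indep2_disjoint L12 z1L z2L z1_neq0 z2_neq0).
have /mem_span2 [l [m z3_lincomb]] : z3 \in <<[:: z1; z2]>>%VS by rewrite -defM.
have l_neq0 : l != 0.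
  apply: contraNneq z3_neq0 => l0; apply/eqP/(disjoint_mem0 L23) => //.
  by rewrite z3_lincomb l0 scale0r add0r memvZ.
have m_neq0 : m != 0.
  apply: contraNneq z3_neq0 => m0; apply/eqP/(disjoint_mem0 L13) => //.
  by rewrite z3_lincomb m0 scale0r addr0 memvZ.
have : l * m * ((s1 * t2 - s2 * t1) * (a1 * c2 - a2 * c1)) = 0.
  move: z3_lincomb; rewrite def_z3 def_z1 def_z2 frame_pt_lincomb -segre_det_lincomb.
  by move=> /(frame_pt_inj B_frame) [<- <- <- <-]; ring.
move/eqP; rewrite !mulf_eq0 (negbTE l_neq0) (negbTE m_neq0) /=.
rewrite (negbTE (frame_ruling1_det_neq0 B_frame st1 st2 _)) -?defL1 -?defL2 //=.
have ac1 : (a1, c1) != (0, 0).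
  apply: contraNneq z1_neq0 => -[a1_0 c1_0].
  by rewrite def_z1 a1_0 c1_0 !mul0r frame_pt0.
move=> /eqP /(det2_eq0_proportional ac1) [k [ka2 kc2]].
apply/frame_ruling2E; exists a1, c1; split => //.
apply: (line_sub_span2 Mline _ (indep2_frame_ruling2 B_frame ac1)).
rewrite defM subv_span2 //; apply/mem_span2.
- by exists s1, t1; rewrite def_z1 frame_pt_lincomb; congr frame_pt; ring.
- by exists (k * s2), (k * t2); rewrite def_z2 ka2 kc2 frame_pt_lincomb; congr frame_pt; ring.
Qed.

Lemma frame_of_skew_triple L1 L2 L3 :
  is_line L1 -> is_line L2 -> is_line L3 -> skew_triple L1 L2 L3 ->
  exists B, [/\ is_frame B, frame_ruling1 B L1, frame_ruling1 B L2 & frame_ruling1 B L3].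
Proof.
move=> L1line L2line L3line [L12 L13 L23].
have [w0 [w1 [w_indep defL3]]] := line_basis L3line.
have L12_full : (L1 + L2)%VS = fullv.
  apply/eqP; rewrite eqEdim subvf dimvf /= (dimv_disjoint_sum (eqP L12)).
  by rewrite (eqP L1line) (eqP L2line).
have /memv_addP [p0 p0L1 [q0 q0L2 def_w0]] : w0 \in (L1 + L2)%VS by rewrite L12_full memvf.
have /memv_addP [p1 p1L1 [q1 q1L2 def_w1]] : w1 \in (L1 + L2)%VS by rewrite L12_full memvf.
have wL3 x y : x *: w0 + y *: w1 \in L3 by rewrite defL3 memvD ?memvZ ?memv_span ?inE ?eqxx ?orbT.
have p_indep : indep2 p0 p1.
  move=> x y xy_p0; apply: w_indep; apply: (disjoint_mem0 L23) (wL3 x y).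
  by rewrite def_w0 def_w1 !scalerDr addrACA xy_p0 add0r memvD ?memvZ.
have q_indep : indep2 q0 q1.
  move=> x y xy_q0; apply: w_indep; apply: (disjoint_mem0 L13) (wL3 x y).
  by rewrite def_w0 def_w1 !scalerDr addrACA xy_q0 addr0 memvD ?memvZ.
exists (Frame p0 p1 q0 q1); split.
- exact: is_frame_of_disjoint L12 p0L1 p1L1 q0L2 q1L2 p_indep q_indep.
- by apply: frame_ruling1_fr01; apply: line_span2.
- by apply: frame_ruling1_fr23; apply: line_span2.
- exists 1, 1; split; first by rewrite xpair_eqE oner_eq0.
  by rewrite defL3 def_w0 def_w1 !frame_ptE /= !scale0r !scale1r !addr0 !add0r.
Qed.

Lemma is_frame_of_free B : free [:: fr0 B; fr1 B; fr2 B; fr3 B] -> is_frame B.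
Proof.
move=> /freeP B_free x0 x1 x2 x3; rewrite frame_ptE => B_x0.
have := B_free (fun i : 'I_4 => nth 0 [:: x0; x1; x2; x3] i).
rewrite !big_ord_recl big_ord0 addr0 /= !addrA => /(_ B_x0) x_0.
by split; [apply: (x_0 0) | apply: (x_0 1) | apply: (x_0 2) | apply: (x_0 3)].
Qed.

Definition ruled (A1 A2 : seq {vspace 'rV[F]_4}) := exists B, [/\ is_frame B,
  {in A1, forall L, frame_ruling1 B L} & {in A2, forall M, frame_ruling2 B M}].

Lemma ruled_sym A1 A2 : ruled A1 A2 -> ruled A2 A1.
Proof.
move=> [B [B_frame BA1 BA2]]; exists (frame_swap B).
by split; [exact: is_frame_swap | exact: BA2 | rewrite /frame_ruling2 frame_swapK].
Qed.

Lemma in_pair (T : eqType) (P : T -> Prop) x y : P x -> P y -> {in [:: x; y], forall u, P u}.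
Proof. by move=> Px Py u; rewrite !inE => /orP [] /eqP ->. Qed.

Lemma ruled11 L M : is_line L -> is_line M -> L != M -> lines_meet L M -> ruled [:: L] [:: M].
Proof.
move=> Lline Mline L_neq_M LM.
have [p [p_neq0 pL pM]] := meet_point LM.
have [l [lL pl]] := extend_line_basis Lline pL p_neq0.
have [n [nM pn]] := extend_line_basis Mline pM p_neq0.
have [v v_out] : exists v, v \notin <<[:: p; l; n]>>%VS.
  by apply: exists_notin; apply: leq_ltn_trans (dim_span _) _.
have n_out : n \notin <<[:: p; l]>>%VS.
  rewrite -(line_span2 Lline pL lL pl); apply: contra_neqN L_neq_M => nL.
  by rewrite (line_span2 Mline pM nM pn) (line_span2 Lline pL nL pn).
exists (Frame p l n v); split.
- apply: is_frame_of_free => /=.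
  have free_rcons X w : free (rcons X w) = free (w :: X) by apply/perm_free/permPl/perm_rcons.
  rewrite -[[:: p; l; n; v]]/(rcons [:: p; l; n] v) free_rcons free_cons v_out.
  rewrite -[[:: p; l; n]]/(rcons [:: p; l] n) free_rcons free_cons n_out.
  exact/indep2_free.
- by move=> L'; rewrite inE => /eqP ->; apply: frame_ruling1_fr01; apply: line_span2.
- by move=> M'; rewrite inE => /eqP ->; apply: frame_ruling1_fr01; apply: line_span2.
Qed.

Lemma ruled12 L M1 M2 : is_line L -> is_line M1 -> is_line M2 ->
  lines_disjoint M1 M2 -> lines_meet L M1 -> lines_meet L M2 -> ruled [:: L] [:: M1; M2].
Proof.
move=> Lline M1line M2line M12 LM1 LM2.
have [p [p_neq0 pL pM1]] := meet_point LM1.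
have [q [q_neq0 qL qM2]] := meet_point LM2.
have [m [mM1 pm]] := extend_line_basis M1line pM1 p_neq0.
have [n [nM2 qn]] := extend_line_basis M2line qM2 q_neq0.
exists (Frame p q m n); split.
- exact: (is_frame_swap (is_frame_of_disjoint M12 pM1 mM1 qM2 nM2 pm qn)).
- move=> L'; rewrite inE => /eqP ->; apply: frame_ruling1_fr01; apply: line_span2 => //.
  exact: indep2_disjoint M12 pM1 qM2 p_neq0 q_neq0.
- by apply: in_pair; [apply: frame_ruling1_fr01 | apply: frame_ruling1_fr23]; apply: line_span2.
Qed.

Lemma ruled22 L1 L2 M1 M2 : is_line L1 -> is_line L2 -> is_line M1 -> is_line M2 ->
  lines_disjoint L1 L2 -> lines_disjoint M1 M2 ->
  lines_meet L1 M1 -> lines_meet L1 M2 -> lines_meet L2 M1 -> lines_meet L2 M2 ->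
  ruled [:: L1; L2] [:: M1; M2].
Proof.
move=> L1line L2line M1line M2line L12 M12 L1M1 L1M2 L2M1 L2M2.
have [p [p_neq0 pL1 pM1]] := meet_point L1M1.
have [q [q_neq0 qL1 qM2]] := meet_point L1M2.
have [r [r_neq0 rL2 rM1]] := meet_point L2M1.
have [s [s_neq0 sL2 sM2]] := meet_point L2M2.
have pq := indep2_disjoint M12 pM1 qM2 p_neq0 q_neq0.
have rs := indep2_disjoint M12 rM1 sM2 r_neq0 s_neq0.
exists (Frame p q r s); split; first exact: is_frame_of_disjoint L12 pL1 qL1 rL2 sL2 pq rs.
- by apply: in_pair; [apply: frame_ruling1_fr01 | apply: frame_ruling1_fr23]; apply: line_span2.
- apply: in_pair; [apply: frame_ruling1_fr01 | apply: frame_ruling1_fr23]; apply: line_span2 => //.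
  + exact: indep2_disjoint L12 pL1 rL2 p_neq0 r_neq0.
  + exact: indep2_disjoint L12 qL1 sL2 q_neq0 s_neq0.
Qed.

Lemma qform0_frame_pt B x0 x1 x2 x3 : is_frame B ->
  qform0 (frame_pt B x0 x1 x2 x3 *m invmx (frame_mx B)) = x0 * x3 - x1 * x2.
Proof.
by move=> /is_frame_unit B_unit; rewrite /frame_pt mulmxK // /qform0 /coord4 !mxE !inordK.
Qed.

Lemma frame_ruling_on_quadric B L x : is_frame B ->
  frame_ruling1 B L \/ frame_ruling2 B L -> x \in L -> on_quadric (invmx (frame_mx B)) x.
Proof.
move=> B_frame [] [s [t [_ /mem_frame_ruling1 defL /defL [a [c ->]]]]].
  by rewrite /on_quadric qform0_frame_pt //; ring.
by rewrite frame_pt_swap /on_quadric qform0_frame_pt //; ring.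
Qed.

Lemma ruled_quadric A1 A2 : ruled A1 A2 ->
  exists g : 'M[F]_4, g \in unitmx /\
    (forall L x, L \in A1 ++ A2 -> x \in L -> on_quadric g x) /\
    ((forall L, L \in A1 -> ruling1 g L) \/ (forall L, L \in A1 -> ruling2 g L)) /\
    ((forall L, L \in A2 -> ruling1 g L) \/ (forall L, L \in A2 -> ruling2 g L)).
Proof.
move=> [B [B_frame BA1 BA2]]; exists (invmx (frame_mx B)).
split; first by rewrite unitmx_inv is_frame_unit.
split.
  move=> L x; rewrite mem_cat => /orP [/BA1 | /BA2] BL;
    apply: frame_ruling_on_quadric => //; by [left | right].
split; [left | right] => L.
- by move=> /BA1; rewrite /ruling1 invmxK.
- by move=> /BA2 /frame_ruling2E; rewrite /ruling2 invmxK.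
Qed.

End Frames.

Lemma size3P (T : Type) (s : seq T) :
  (3 <= size s)%N -> exists x y z r, s = [:: x, y, z & r].
Proof. by case: s => [|x [|y [|z r]]] //= _; exists x, y, z, r. Qed.

Lemma size12P (T : Type) (s : seq T) :
  (0 < size s <= 2)%N -> (exists x, s = [:: x]) \/ (exists x y, s = [:: x; y]).
Proof. by case: s => [|x [|y [|]]] //= _; [left; exists x | right; exists x, y]. Qed.

Section BipartiteArrangement.
Variable F : fieldType.

Definition skew_family (A : seq {vspace 'rV[F]_4}) :=
  [/\ uniq A, {in A, forall L, is_line L} & {in A &, forall L M, L != M -> lines_disjoint L M}].

Definition bipartite_arrangement (A1 A2 : seq {vspace 'rV[F]_4}) :=
  [/\ skew_family A1, skew_family A2, {in A1, forall L, L \notin A2}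
    & {in A1 & A2, forall L M, lines_meet L M}].

Lemma skew_family_prefix3 (L1 L2 L3 : {vspace 'rV[F]_4}) r :
  skew_family [:: L1, L2, L3 & r] ->
  [/\ is_line L1, is_line L2, is_line L3 & skew_triple L1 L2 L3].
Proof.
move=> [/= /and4P [] /norP [L12 /norP [L13 _]] /norP [L23 _] _ _ Alines Askew].
have L1A : L1 \in [:: L1, L2, L3 & r] by rewrite mem_head.
have L2A : L2 \in [:: L1, L2, L3 & r] by rewrite !inE eqxx orbT.
have L3A : L3 \in [:: L1, L2, L3 & r] by rewrite !inE eqxx !orbT.
by split; [apply: Alines .. | split; apply: Askew].
Qed.

Variables A1 A2 : seq {vspace 'rV[F]_4}.
Hypothesis arr : bipartite_arrangement A1 A2.

Lemma frame_of_transversals M1 M2 M3 r : A2 = [:: M1, M2, M3 & r] ->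
  exists B, [/\ is_frame B, {in [:: M1; M2; M3], forall M, frame_ruling1 B M}
    & {in A1, forall L, frame_ruling2 B L}].
Proof.
have [[_ A1_lines _] A2_skew _ A12_meet] := arr.
move=> defA2; have /skew_family_prefix3 [M1line M2line M3line Mskew] :
  skew_family [:: M1, M2, M3 & r] by rewrite -defA2.
have [B [B_frame BM1 BM2 BM3]] := frame_of_skew_triple M1line M2line M3line Mskew.
exists B; split => //.
  by move=> M; rewrite !inE => /or3P [] /eqP ->.
move=> L LA1; apply: frame_ruling2_of_transversal Mskew _ _ _ _ => //; first exact: A1_lines.
all: by apply: A12_meet; rewrite // defA2 !inE eqxx ?orbT.
Qed.

Lemma ruled_large : (3 <= size A1)%N -> (3 <= size A2)%N -> ruled A1 A2.
Proof.
have [A1_skew [_ A2_lines _] _ A12_meet] := arr.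
move=> /size3P [L1 [L2 [L3 [r defA1]]]] /size3P [M1 [M2 [M3 [r' defA2]]]].
have [B [B_frame _ BA1]] := frame_of_transversals defA2.
have /skew_family_prefix3 [_ _ _ Lskew] : skew_family [:: L1, L2, L3 & r] by rewrite -defA1.
have L1A1 : L1 \in A1 by rewrite defA1 mem_head.
have L2A1 : L2 \in A1 by rewrite defA1 !inE eqxx orbT.
have L3A1 : L3 \in A1 by rewrite defA1 !inE eqxx !orbT.
exists (frame_swap B); split; [exact: is_frame_swap | exact BA1 |].
move=> M MA2; apply: (frame_ruling2_of_transversal (is_frame_swap B_frame)
  (BA1 _ L1A1) (BA1 _ L2A1) (BA1 _ L3A1) Lskew (A2_lines _ MA2));
  by rewrite lines_meetC; apply: A12_meet.
Qed.

Lemma ruled_size3 : size A2 = 3 -> ruled A1 A2.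
Proof.
move=> sizeA2; have /size3P [M1 [M2 [M3 [r defA2]]]] : (3 <= size A2)%N by rewrite sizeA2.
move: sizeA2; rewrite defA2 /= => /eqP; rewrite !eqSS => /nilP r_nil.
have [B [B_frame BM BA1]] := frame_of_transversals defA2.
by apply: ruled_sym; exists B; rewrite r_nil.
Qed.

End BipartiteArrangement.

Lemma ruled_small (F : fieldType) (A1 A2 : seq {vspace 'rV[F]_4}) :
  (0 < size A1)%N -> (size A1 <= size A2 <= 2)%N -> bipartite_arrangement A1 A2 ->
  ruled A1 A2.
Proof.
move=> A1_gt0 /andP [A12_size A2_le2].
have A1_12 : (0 < size A1 <= 2)%N by rewrite A1_gt0 (leq_trans A12_size A2_le2).
have A2_12 : (0 < size A2 <= 2)%N by rewrite A2_le2 (leq_trans A1_gt0 A12_size).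
have [[L defA1] | [L [L' defA1]]] := size12P A1_12;
  have [[M defA2] | [M [M' defA2]]] := size12P A2_12; move: A12_size;
  rewrite defA1 defA2 // => _ [[/= uA1 A1_lines A1_skew] [/= uA2 A2_lines A2_skew] A12_disj A12_meet].
all: first [apply: ruled11 | apply: ruled12 | apply: ruled22].
all: try solve [apply: A1_lines; rewrite !inE eqxx ?orbT // | apply: A2_lines; rewrite !inE eqxx ?orbT //
              | apply: A12_meet; rewrite !inE eqxx ?orbT //].
- by have := A12_disj L; rewrite !inE eqxx => /(_ isT).
- by apply: A2_skew; rewrite ?inE ?eqxx ?orbT //; move: uA2; rewrite inE andbT.
- by apply: A1_skew; rewrite ?inE ?eqxx ?orbT //; move: uA1; rewrite inE andbT.
- by apply: A2_skew; rewrite ?inE ?eqxx ?orbT //; move: uA2; rewrite inE andbT.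
Qed.

Theorem lemma2p3 (F : fieldType) (A1 A2 : seq {vspace 'rV[F]_4}) (a b : nat) :
  (0 < a)%N -> (0 < b)%N ->
  size A1 = a -> size A2 = b ->
  uniq A1 -> uniq A2 ->
  (forall L, L \in A1 ++ A2 -> is_line L) ->
  (forall L, L \in A1 -> L \notin A2) ->
  (forall L M, L \in A1 -> M \in A2 -> lines_meet L M) ->
  (forall L M, L \in A1 -> M \in A1 -> L != M -> lines_disjoint L M) ->
  (forall L M, L \in A2 -> M \in A2 -> L != M -> lines_disjoint L M) ->
  ((3 <= a <= b)%N \/ (a <= b <= 3)%N) ->
  exists g : 'M[F]_4, g \in unitmx /\
    (forall L x, L \in A1 ++ A2 -> x \in L -> on_quadric g x) /\
    ((forall L, L \in A1 -> ruling1 g L) \/ (forall L, L \in A1 -> ruling2 g L)) /\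
    ((forall L, L \in A2 -> ruling1 g L) \/ (forall L, L \in A2 -> ruling2 g L)).
Proof.
move=> a_gt0 _ sizeA1 <- uA1 uA2 A_lines A12_disj A12_meet A1_skew A2_skew sizes; subst a.
apply: ruled_quadric.
have arr : bipartite_arrangement A1 A2.
  by split=> //; split=> // L LA; apply: A_lines; rewrite mem_cat LA ?orbT.
case: sizes => [/andP [a_ge3 ab] | /andP [ab b_le3]].
  exact: ruled_large arr a_ge3 (leq_trans a_ge3 ab).
have [b_eq3 | b_neq3] := eqVneq (size A2) 3%N; first exact: ruled_size3 arr b_eq3.
by apply: ruled_small arr; rewrite // ab -ltnS ltn_neqAle b_neq3.
Qed.
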